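(* If $\mathcal R$ is a TRS that is complete modulo $\mathcal B$, then $\ddot{\mathcal R}$ is a TRS which is normalization equivalent modulo $\mathcal B$ to $\mathcal R$, conversion equivalent modulo $\mathcal B$ to $\mathcal R$, and canonical modulo $\mathcal B$.
   Context: Terms over a signature $\mathcal F$; $s\to_{\mathcal R}t$ is the usual rewrite relation (closure under contexts and substitutions), $\leftarrow$ its inverse. $\mathcal B$ is a fixed ES with $\mathrm{Var}(\ell)=\mathrm{Var}(r)$ for all $\ell\approx r\in\mathcal B$, $\sim_{\mathcal B}=\leftrightarrow^*_{\mathcal B}$, $\to_{\mathcal R/\mathcal B}=\sim_{\mathcal B}\cdot\to_{\mathcal R}\cdot\sim_{\mathcal B}$. $\mathcal R$ is terminating modulo $\mathcal B$ if $\to_{\mathcal R/\mathcal B}$ has no infinite sequence; Church–Rosser modulo $\mathcal B$ if $\leftrightarrow^*_{\mathcal R\cup\mathcal B}\subseteq\to^*_{\mathcal R}\cdot\sim_{\mathcal B}\cdot\leftarrow^*_{\mathcal R}$; complete modulo $\mathcal B$ if both. TRSs $\mathcal R,\mathcal S$ are normalization equivalent modulo $\mathcal B$ if $\to^!_{\mathcal R}\cdot\sim_{\mathcal B}=\to^!_{\mathcal S}\cdot\sim_{\mathcal B}$ ($a\to^!b$: $a\to^*b$ with $b$ a normal form), and conversion equivalent modulo $\mathcal B$ if $\leftrightarrow^*_{\mathcal R\cup\mathcal B}=\leftrightarrow^*_{\mathcal S\cup\mathcal B}$. Two rules $\ell\to r,\ell'\to r'$ are right-$\mathcal B$-equivalent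 variants if there is a renaming $\sigma$ with $\ell\sigma=\ell'$ and $r\sigma\sim_{\mathcal B}r'$; for a TRS $\mathcal T$, $\mathcal T_{\simeq}$ denotes a subset of $\mathcal T$ containing exactly one representative of each class of rules of $\mathcal T$ that are right-$\mathcal B$-equivalent variants of each other. A TRS is left-reduced if for every rule $\ell\to r$, $\ell$ is a normal form of the TRS without that rule; right-$\mathcal B$-reduced if for every rule $\ell\to r$, $r$ is a normal form of $\to_{\mathcal R/\mathcal B}$; canonical modulo $\mathcal B$ if complete modulo $\mathcal B$, left-reduced and right-$\mathcal B$-reduced. For $\mathcal R$ terminating modulo $\mathcal B$: $\dot{\mathcal R}=\{\ell\to r{\downarrow_{\mathcal R/\mathcal B}}\mid\ell\to r\in\mathcal R\}_{\simeq}$, where $r{\downarrow_{\mathcal R/\mathcal B}}$ is an arbitrary normal form of $r$ w.r.t. $\to_{\mathcal R/\mathcal B}$, and $\ddot{\mathcal R}=\{\ell\to r\in\dot{\mathcal R}\mid \ell\text{ is a normal form of }\dot{\mathcal R}\setminus\{\ell\to r\}\}$. *)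

From Stdlib Require Import List Relations.
Import ListNotations.
Set Implicit Arguments.

Section TRS.
Variables (F V : Type).

Inductive term : Type :=
| Var : V -> term
| Fun : F -> list term -> term.

Definition rule : Type := (term * term)%type.
Definition rules : Type := rule -> Prop.

Fixpoint subst (s : V -> term) (t : term) : term :=
  match t with
  | Var x => s x
  | Fun f ts => Fun f (map (subst s) ts)
  end.

Fixpoint vars (t : term) : list V :=
  match t with
  | Var x => [x]
  | Fun f ts => concat (map vars ts)
  end.

Inductive rstep (R : rules) : term -> term -> Prop :=
| rstep_root : forall l r (s : V -> term),
    R (l, r) -> rstep R (subst s l) (subst s r)
| rstep_ctx : forall f ts1 ts2 u v,
    rstep R u v -> rstep R (Fun f (ts1 ++ u :: ts2)) (Fun f (ts1 ++ v :: ts2)).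

Definition beq (B : rules) : relation term := clos_refl_sym_trans term (rstep B).

Definition relmod (R B : rules) (s t : term) : Prop :=
  exists s' t', beq B s s' /\ rstep R s' t' /\ beq B t' t.

Definition nf_of (rel : relation term) (t : term) : Prop := ~ exists u, rel t u.

Definition normalizes (R : rules) (s t : term) : Prop :=
  clos_refl_trans term (rstep R) s t /\ nf_of (rstep R) t.

Definition terminating_mod (R B : rules) : Prop :=
  ~ exists f : nat -> term, forall n, relmod R B (f n) (f (S n)).

Definition conv_RB (R B : rules) : relation term :=
  clos_refl_sym_trans term (union term (rstep R) (rstep B)).

Definition church_rosser_mod (R B : rules) : Prop :=
  forall s t, conv_RB R B s t ->
    exists u v, clos_refl_trans term (rstep R) s u /\ beq B u v /\
                clos_refl_trans term (rstep R) t v.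

Definition complete_mod (R B : rules) : Prop :=
  terminating_mod R B /\ church_rosser_mod R B.

Definition normalization_equivalent_mod (R S B : rules) : Prop :=
  forall s t, (exists u, normalizes R s u /\ beq B u t) <->
              (exists u, normalizes S s u /\ beq B u t).

Definition conversion_equivalent_mod (R S B : rules) : Prop :=
  forall s t, conv_RB R B s t <-> conv_RB S B s t.

Definition is_TRS (R : rules) : Prop :=
  forall l r, R (l, r) -> (forall x, l <> Var x) /\ incl (vars r) (vars l).

Definition remove_rule (R : rules) (rho : rule) : rules :=
  fun rho' => R rho' /\ rho' <> rho.

Definition left_reduced (R : rules) : Prop :=
  forall l r, R (l, r) -> nf_of (rstep (remove_rule R (l, r))) l.

Definition right_B_reduced (R B : rules) : Prop :=
  forall l r, R (l, r) -> nf_of (relmod R B) r.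

Definition canonical_mod (R B : rules) : Prop :=
  complete_mod R B /\ left_reduced R /\ right_B_reduced R B.

Definition renaming (sg : V -> V) : Prop :=
  exists tau : V -> V, (forall x, tau (sg x) = x) /\ (forall x, sg (tau x) = x).

Definition right_B_variants (B : rules) (rho rho' : rule) : Prop :=
  exists sg, renaming sg /\
    subst (fun x => Var (sg x)) (fst rho) = fst rho' /\
    beq B (subst (fun x => Var (sg x)) (snd rho)) (snd rho').

(* Rdot is a legitimate choice of  {l -> r↓_{R/B} | l -> r in R}_≃ :
   nf chooses, for every rule, a normal form of its rhs w.r.t. ->_{R/B},
   and Rdot contains exactly one representative of each class of
   right-B-equivalent variants among the resulting rules. *)
Definition is_Rdot (R B Rdot : rules) : Prop :=
  exists nf : rule -> term,
    (forall l r, R (l, r) ->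
        clos_refl_trans term (relmod R B) r (nf (l, r)) /\
        nf_of (relmod R B) (nf (l, r))) /\
    let T : rules := fun rho => exists l r, R (l, r) /\ rho = (l, nf (l, r)) in
    (forall rho, Rdot rho -> T rho) /\
    (forall rho, T rho -> exists rho', Rdot rho' /\ right_B_variants B rho rho') /\
    (forall rho rho', Rdot rho -> Rdot rho' -> right_B_variants B rho rho' -> rho = rho').

Definition Rddot (Rdot : rules) : rules :=
  fun rho => Rdot rho /\ nf_of (rstep (remove_rule Rdot rho)) (fst rho).

End TRS.

(* An Rdot rule is an R rule with its right-hand side normalised, so an Rdot
   step is a nonempty ->_{R/B} sequence: Rddot, a subset of Rdot, therefore
   terminates modulo B and its conversion lies inside that of R.  Conversely
   every R-reducible term is Rddot-reducible.  An R-redex encompasses the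
   left-hand side of some Rdot rule; if that rule is not in Rddot, its
   left-hand side is reducible by another Rdot rule, whose left-hand side is
   strictly below it in the encompassment order.  It cannot be a variant:
   the two right-hand sides would be convertible R/B-normal forms, hence
   B-equivalent because R is Church-Rosser modulo B, and Rdot keeps only one
   rule per class of right-B-equivalent variants.  So R and Rddot have the
   same normal forms, and the remaining claims follow from the Church-Rosser
   property of R modulo B. *)

From Stdlib Require Import List Relations Lia Arith Classical ClassicalEpsilon.
From Stdlib Require Import Wellfounded.
Import ListNotations.
Set Implicit Arguments.

Section Closures.
Variable A : Type.

Lemma clos_trans_map (r r2 : relation A) (g : A -> A) :
  (forall a b, r a b -> r2 (g a) (g b)) ->
  forall a b, clos_trans A r a b -> clos_trans A r2 (g a) (g b).
Proof. intros H a b Hab; induction Hab; eauto using clos_trans. Qed.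

Lemma clos_refl_trans_map (r r2 : relation A) (g : A -> A) :
  (forall a b, r a b -> r2 (g a) (g b)) ->
  forall a b, clos_refl_trans A r a b -> clos_refl_trans A r2 (g a) (g b).
Proof. intros H a b Hab; induction Hab; eauto using clos_refl_trans. Qed.

Lemma clos_refl_sym_trans_map (r r2 : relation A) (g : A -> A) :
  (forall a b, r a b -> r2 (g a) (g b)) ->
  forall a b, clos_refl_sym_trans A r a b -> clos_refl_sym_trans A r2 (g a) (g b).
Proof. intros H a b Hab; induction Hab; eauto using clos_refl_sym_trans. Qed.

Lemma clos_refl_sym_trans_incl (r r2 : relation A) :
  inclusion A r r2 -> inclusion A (clos_refl_sym_trans A r) (clos_refl_sym_trans A r2).
Proof. intros H a b Hab; induction Hab; eauto using clos_refl_sym_trans. Qed.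

Lemma clos_trans_step_rt (r : relation A) a b c :
  r a b -> clos_refl_trans A r b c -> clos_trans A r a c.
Proof.
  intros Hab Hbc. apply clos_rt_rtn1 in Hbc.
  induction Hbc as [|c d Hcd _ IH]; [apply t_step; exact Hab|].
  eapply t_trans; [exact IH | apply t_step; exact Hcd].
Qed.

Lemma clos_refl_trans_from_nf (r : relation A) a b :
  clos_refl_trans A r a b -> (~ exists u, r a u) -> a = b.
Proof.
  intros H Hn. apply clos_rt_rt1n in H. destruct H; auto.
  exfalso; apply Hn; eauto.
Qed.

Lemma Acc_of_no_chain (r : relation A) :
  (~ exists f : nat -> A, forall n, r (f n) (f (S n))) ->
  forall x, Acc (transp A r) x.
Proof.
  intros H x. apply NNPP; intro Hx. apply H.
  assert (step : forall a : {a | ~ Acc (transp A r) a},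
             {b : {b | ~ Acc (transp A r) b} | r (proj1_sig a) (proj1_sig b)}).
  { intros [a Ha]. apply constructive_indefinite_description.
    apply NNPP; intro Hn. apply Ha. constructor. intros y Hy.
    apply NNPP; intro Hy'. apply Hn. exists (exist _ y Hy'). exact Hy. }
  pose (g := fix g n := match n with 0 => exist _ x Hx | S n => proj1_sig (step (g n)) end).
  exists (fun n => proj1_sig (g n)). intro n. exact (proj2_sig (step (g n))).
Qed.

Lemma no_chain_of_Acc (r : relation A) x :
  Acc (transp A r) x -> forall f n, f n = x -> ~ (forall n, r (f n) (f (S n))).
Proof.
  induction 1 as [x _ IH]. intros f n Hn Hc.
  apply (IH (f (S n)) ltac:(rewrite <- Hn; apply Hc) f (S n) eq_refl Hc).
Qed.

Lemma normal_form_of_Acc (r : relation A) x :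
  Acc (transp A r) x -> exists u, clos_refl_trans A r x u /\ ~ (exists v, r u v).
Proof.
  induction 1 as [x _ IH].
  destruct (classic (exists u, r x u)) as [[u Hu]|Hn].
  - destruct (IH u Hu) as [v [H1 H2]]. exists v; split; auto.
    eapply rt_trans; [apply rt_step; exact Hu | exact H1].
  - exists x; split; [apply rt_refl | exact Hn].
Qed.

End Closures.

Section Terms.
Variables F V : Type.
Notation tm := (term F V).
Notation var := (@Var F V).

Fixpoint term_ind' (P : tm -> Prop) (HVar : forall x, P (var x))
  (HFun : forall f ts, Forall P ts -> P (Fun f ts)) (t : tm) {struct t} : P t :=
  match t with
  | Var _ x => HVar x
  | Fun f ts => HFun f ts ((fix go (l : list tm) : Forall P l :=
       match l with
       | [] => @Forall_nil tm P
       | u :: l' => @Forall_cons tm P u l' (@term_ind' P HVar HFun u) (go l')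
       end) ts)
  end.

Lemma subst_Var (t : tm) : subst var t = t.
Proof.
  induction t as [x|f ts IH] using term_ind'; simpl; auto.
  f_equal. rewrite <- (map_id ts) at 2. apply map_ext_Forall. exact IH.
Qed.

Lemma subst_subst (s1 s2 : V -> tm) (t : tm) :
  subst s2 (subst s1 t) = subst (fun x => subst s2 (s1 x)) t.
Proof.
  induction t as [x|f ts IH] using term_ind'; simpl; auto.
  f_equal. rewrite map_map. apply map_ext_Forall. exact IH.
Qed.

Lemma subst_ext (s1 s2 : V -> tm) (t : tm) :
  (forall x, In x (vars t) -> s1 x = s2 x) -> subst s1 t = subst s2 t.
Proof.
  induction t as [x|f ts IH] using term_ind'; simpl; intros H.
  - apply H; auto.
  - f_equal. apply map_ext_in. intros u Hu. rewrite Forall_forall in IH.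
    apply IH; auto. intros x Hx. apply H. apply in_concat. exists (vars u).
    split; auto. apply in_map; auto.
Qed.

Lemma in_vars_subst (s : V -> tm) (t : tm) y :
  In y (vars (subst s t)) <-> exists x, In x (vars t) /\ In y (vars (s x)).
Proof.
  induction t as [x|f ts IH] using term_ind'; simpl.
  - split; [intros H; exists x; auto | intros [z [[->|[]] H]]; auto].
  - rewrite Forall_forall in IH. rewrite in_concat. split.
    + intros [l [Hl Hy]]. rewrite map_map in Hl. apply in_map_iff in Hl.
      destruct Hl as [u [<- Hu]]. apply IH in Hy; auto.
      destruct Hy as [x [Hx Hy]]. exists x; split; auto.
      apply in_concat. exists (vars u); split; auto. apply in_map; auto.
    + intros [x [Hx Hy]]. apply in_concat in Hx. destruct Hx as [l [Hl Hx]].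
      apply in_map_iff in Hl. destruct Hl as [u [<- Hu]].
      exists (vars (subst s u)). split.
      * rewrite map_map. apply in_map_iff. exists u; auto.
      * apply IH; eauto.
Qed.

Lemma in_vars_ctx f ts1 (u : tm) ts2 y :
  In y (vars (Fun f (ts1 ++ u :: ts2))) <->
  In y (concat (map (@vars F V) ts1)) \/ In y (vars u) \/
  In y (concat (map (@vars F V) ts2)).
Proof. simpl. rewrite map_app, concat_app. simpl. rewrite !in_app_iff. tauto. Qed.

Lemma rstep_subst (X : rules F V) (s : V -> tm) u v :
  rstep X u v -> rstep X (subst s u) (subst s v).
Proof.
  induction 1.
  - rewrite !subst_subst. constructor; auto.
  - simpl. rewrite !map_app. simpl. constructor; auto.
Qed.

Lemma rstep_incl (X Y : rules F V) u v :
  (forall rho, X rho -> Y rho) -> rstep X u v -> rstep Y u v.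
Proof. intros H; induction 1; constructor; auto. Qed.

Lemma rstep_vars_incl (X : rules F V) :
  (forall l r, X (l, r) -> incl (vars r) (vars l)) ->
  forall s t, rstep X s t -> incl (vars t) (vars s).
Proof.
  intros HX s t H. induction H; intros y Hy.
  - apply in_vars_subst in Hy. destruct Hy as [x [Hx Hy]].
    apply in_vars_subst. exists x; split; auto. eapply HX; eauto.
  - apply in_vars_ctx in Hy. apply in_vars_ctx. intuition.
Qed.

Lemma rstep_inverse (X : rules F V) s t :
  rstep X s t -> rstep (fun rho => X (snd rho, fst rho)) t s.
Proof. induction 1; constructor; auto. Qed.

Lemma beq_subst (B : rules F V) s u v : beq B u v -> beq B (subst s u) (subst s v).
Proof. apply clos_refl_sym_trans_map. intros; apply rstep_subst; auto. Qed.

Lemma beq_ctx (B : rules F V) f ts1 ts2 u v :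
  beq B u v -> beq B (Fun f (ts1 ++ u :: ts2)) (Fun f (ts1 ++ v :: ts2)).
Proof.
  apply (clos_refl_sym_trans_map _ (fun u => Fun f (ts1 ++ u :: ts2))).
  intros; constructor; auto.
Qed.

Lemma beq_vars (B : rules F V) :
  (forall l r, B (l, r) -> incl (vars l) (vars r) /\ incl (vars r) (vars l)) ->
  forall a b, beq B a b -> incl (vars a) (vars b) /\ incl (vars b) (vars a).
Proof.
  intros HB a b. induction 1 as [a b H| | |].
  - split.
    + eapply rstep_vars_incl; [|apply rstep_inverse, H]. intros l r Hl. apply (HB _ _ Hl).
    + eapply rstep_vars_incl; [|exact H]. intros l r Hl. apply (HB _ _ Hl).
  - split; apply incl_refl.
  - tauto.
  - split; eapply incl_tran; try apply IHclos_refl_sym_trans1;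
      try apply IHclos_refl_sym_trans2.
Qed.

Lemma rstep_relmod (X B : rules F V) s t : rstep X s t -> relmod X B s t.
Proof. intros H; exists s, t; repeat split; auto; apply rst_refl. Qed.

Lemma relmod_subst (R B : rules F V) s u v :
  relmod R B u v -> relmod R B (subst s u) (subst s v).
Proof.
  intros [u' [v' [H1 [H2 H3]]]]. exists (subst s u'), (subst s v').
  split; [apply beq_subst|split; [apply rstep_subst|apply beq_subst]]; auto.
Qed.

Lemma relmod_ctx (R B : rules F V) f ts1 ts2 u v :
  relmod R B u v -> relmod R B (Fun f (ts1 ++ u :: ts2)) (Fun f (ts1 ++ v :: ts2)).
Proof.
  intros [u' [v' [H1 [H2 H3]]]].
  exists (Fun f (ts1 ++ u' :: ts2)), (Fun f (ts1 ++ v' :: ts2)).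
  split; [apply beq_ctx|split; [constructor|apply beq_ctx]]; auto.
Qed.

Lemma relmod_plus_beq (R B : rules F V) a b x y :
  clos_trans tm (relmod R B) a b -> beq B x a -> beq B b y ->
  clos_trans tm (relmod R B) x y.
Proof.
  intros H; revert x y; induction H as [a b H|a b c _ IH1 _ IH2]; intros x y Hx Hy.
  - apply t_step. destruct H as [a' [b' [H1 [H2 H3]]]]. exists a', b'.
    split; [eapply rst_trans; eauto | split; auto; eapply rst_trans; eauto].
  - eapply t_trans; [apply IH1; [exact Hx | apply rst_refl] |
                     apply IH2; [apply rst_refl | exact Hy]].
Qed.

Lemma relmod_nf_rstep_nf (R B : rules F V) t :
  nf_of (relmod R B) t -> nf_of (rstep R) t.
Proof. intros H [u Hu]; apply H; exists u; apply rstep_relmod; auto. Qed.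

Lemma relmod_nf_renaming (R B : rules F V) t p :
  renaming p -> nf_of (relmod R B) t -> nf_of (relmod R B) (subst (fun x => var (p x)) t).
Proof.
  intros [tau [H1 H2]] Hn [w Hw]. apply Hn. exists (subst (fun x => var (tau x)) w).
  apply (relmod_subst (fun x => var (tau x))) in Hw.
  rewrite subst_subst in Hw. simpl in Hw.
  rewrite (subst_ext _ var) in Hw; [|intros; rewrite H1; auto].
  rewrite subst_Var in Hw. exact Hw.
Qed.

Lemma beq_conv (X B : rules F V) a b : beq B a b -> conv_RB X B a b.
Proof. apply clos_refl_sym_trans_incl. intros ? ? ?; right; auto. Qed.

Lemma rstar_conv (X B : rules F V) a b :
  clos_refl_trans tm (rstep X) a b -> conv_RB X B a b.
Proof. induction 1; [apply rst_step; left; auto | apply rst_refl | eapply rst_trans; eauto]. Qed.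

Lemma relmod_conv (R B : rules F V) a b : relmod R B a b -> conv_RB R B a b.
Proof.
  intros [a' [b' [H1 [H2 H3]]]].
  eapply rst_trans; [apply beq_conv; eauto|].
  eapply rst_trans; [apply rst_step; left; eauto | apply beq_conv; eauto].
Qed.

Lemma relmod_plus_conv (R B : rules F V) a b :
  clos_trans tm (relmod R B) a b -> conv_RB R B a b.
Proof. induction 1; [apply relmod_conv; auto | eapply rst_trans; eauto]. Qed.

Lemma relmod_star_conv (R B : rules F V) a b :
  clos_refl_trans tm (relmod R B) a b -> conv_RB R B a b.
Proof. induction 1; [apply relmod_conv; auto | apply rst_refl | eapply rst_trans; eauto]. Qed.

Lemma conv_subst (R B : rules F V) s a b :
  conv_RB R B a b -> conv_RB R B (subst s a) (subst s b).
Proof.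
  apply clos_refl_sym_trans_map. intros x y [H|H]; [left|right]; apply rstep_subst; auto.
Qed.

(* [enc l t]: t encompasses l, i.e. an instance of l is a subterm of t. *)
Inductive enc (l : tm) : tm -> Prop :=
| enc_root : forall s, enc l (subst s l)
| enc_sub : forall f ts1 ts2 u, enc l u -> enc l (Fun f (ts1 ++ u :: ts2)).

Lemma enc_refl l : enc l l.
Proof. rewrite <- (subst_Var l) at 2. constructor. Qed.

Lemma enc_subst l t s : enc l t -> enc l (subst s t).
Proof.
  induction 1.
  - rewrite subst_subst. constructor.
  - simpl. rewrite map_app. simpl. constructor; auto.
Qed.

Lemma enc_trans l t u : enc l t -> enc t u -> enc l u.
Proof. intros H1 H2. induction H2; [apply enc_subst | constructor]; auto. Qed.

Lemma rstep_enc_lhs (X : rules F V) t u :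
  rstep X t u -> exists l r, X (l, r) /\ enc l t.
Proof.
  induction 1.
  - exists l, r; split; auto. constructor.
  - destruct IHrstep as [l [r [H1 H2]]]. exists l, r; split; auto. constructor; auto.
Qed.

Lemma enc_lhs_rstep (X : rules F V) l r t :
  X (l, r) -> enc l t -> exists u, rstep X t u.
Proof.
  intros HX H. induction H.
  - eexists; constructor; eauto.
  - destruct IHenc as [v Hv]. eexists; constructor; eauto.
Qed.

Fixpoint size (t : tm) : nat :=
  match t with Var _ _ => 1 | Fun _ ts => 2 + list_sum (map size ts) end.

Lemma size_pos t : 1 <= size t.
Proof. destruct t; simpl; lia. Qed.

Lemma size_ctx f ts1 (u : tm) ts2 : size u < size (Fun f (ts1 ++ u :: ts2)).
Proof. simpl. rewrite map_app, list_sum_app. simpl. lia. Qed.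

Lemma size_subst (s : V -> tm) (t : tm) :
  size t <= size (subst s t) /\
  (size t = size (subst s t) -> forall x, In x (vars t) -> exists y, s x = var y).
Proof.
  induction t as [x|f ts IH] using term_ind'; simpl.
  - split; [apply size_pos|]. intros H y [<-|[]].
    destruct (s x) as [z|g us] eqn:E; [eauto|]. simpl in H. lia.
  - assert (list_sum (map size ts) <= list_sum (map size (map (subst s) ts)) /\
            (list_sum (map size ts) = list_sum (map size (map (subst s) ts)) ->
             forall x, In x (concat (map (@vars F V) ts)) -> exists y, s x = var y)).
    { induction IH as [|u ts [H1 H2] _ [IH1 IH2]]; simpl; [split; [lia | intros _ _ []]|].
      split; [lia|]. intros E x Hx. apply in_app_iff in Hx. destruct Hx.
      - apply H2; auto; lia.
      - apply IH2; auto; lia. }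
    destruct H as [H1 H2]. split; [lia|]. intros E. apply H2. lia.
Qed.

Lemma enc_size l t : enc l t -> (exists s, t = subst s l) \/ size l < size t.
Proof.
  induction 1.
  - left; eauto.
  - right. pose proof (size_ctx f ts1 u ts2). destruct IHenc as [[s ->]|H1]; [|lia].
    pose proof (proj1 (size_subst s l)). lia.
Qed.

Lemma length_vars_le_size t : length (vars t) <= size t.
Proof.
  induction t as [x|f ts IH] using term_ind'; simpl; [lia|].
  assert (length (concat (map (@vars F V) ts)) <= list_sum (map size ts)); [|lia].
  induction IH; simpl; auto. rewrite length_app. lia.
Qed.

Definition var_eq_dec (x y : V) : {x = y} + {x <> y} :=
  match excluded_middle_informative (x = y) with
  | left h => left h | right h => right h end.

Lemma nodup_length_le (l : list V) : length (nodup var_eq_dec l) <= length l.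
Proof. induction l; simpl; auto. destruct (in_dec var_eq_dec a l); simpl; lia. Qed.

Lemma NoDup_of_nodup_length (l : list V) : length (nodup var_eq_dec l) = length l -> NoDup l.
Proof.
  induction l; simpl; intros H; [constructor|].
  destruct (in_dec var_eq_dec a l).
  - pose proof (nodup_length_le l). lia.
  - constructor; auto.
Qed.

Lemma NoDup_map_inj (g : V -> V) m a b :
  NoDup (map g m) -> In a m -> In b m -> g a = g b -> a = b.
Proof.
  induction m as [|c m IH]; simpl; [tauto|]. intros H Ha Hb E.
  inversion H as [|? ? Hn Hd]; subst.
  destruct Ha as [<-|Ha]; destruct Hb as [<-|Hb]; auto.
  - exfalso; apply Hn. rewrite E. apply in_map; auto.
  - exfalso; apply Hn. rewrite <- E. apply in_map; auto.
Qed.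

Definition swap (a b z : V) : V :=
  if var_eq_dec z a then b else if var_eq_dec z b then a else z.

Lemma swap_involutive a b z : swap a b (swap a b z) = z.
Proof.
  unfold swap.
  destruct (var_eq_dec z a); destruct (var_eq_dec z b);
  repeat match goal with |- context [var_eq_dec ?x ?y] => destruct (var_eq_dec x y) end;
  congruence.
Qed.

Lemma renaming_extend (L : list V) (g : V -> V) :
  NoDup L -> (forall a b, In a L -> In b L -> g a = g b -> a = b) ->
  exists p, renaming p /\ forall a, In a L -> p a = g a.
Proof.
  induction L as [|a L IH]; intros Hnd Hinj.
  - exists (fun x => x). split; [exists (fun x => x); auto | intros _ []].
  - inversion Hnd as [|? ? Hn Hnd']; subst.
    destruct IH as [p' [[tau' [H1 H2]] H3]]; auto.
    { intros; apply Hinj; simpl; auto. }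
    exists (fun z => swap (p' a) (g a) (p' z)). split.
    + exists (fun z => tau' (swap (p' a) (g a) z)). split; intros x.
      * rewrite swap_involutive; auto.
      * rewrite H2, swap_involutive; auto.
    + intros b [<-|Hb].
      * unfold swap. destruct (var_eq_dec (p' a) (p' a)); congruence.
      * rewrite (H3 b Hb). unfold swap.
        destruct (var_eq_dec (g b) (p' a)) as [e|ne].
        { exfalso. rewrite <- H3 in e; auto. apply (f_equal tau') in e.
          rewrite !H1 in e. subst; auto. }
        destruct (var_eq_dec (g b) (g a)) as [e|ne2]; auto.
        exfalso. apply Hinj in e; simpl; auto. subst; auto.
Qed.

Definition nvars (t : tm) : nat := length (nodup var_eq_dec (vars t)).

Lemma nvars_le_size t : nvars t <= size t.
Proof.
  unfold nvars. pose proof (nodup_length_le (vars t)).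
  pose proof (length_vars_le_size t). lia.
Qed.

(* A size-preserving substitution maps the variables of t to variables; if
   it is injective on them it is a renaming, otherwise it merges some. *)
Lemma subst_size_eq_renaming_or_fewer_vars (s : V -> tm) (t : tm) :
  size (subst s t) = size t ->
  (exists p, renaming p /\ subst (fun x => var (p x)) t = subst s t) \/
  nvars (subst s t) < nvars t.
Proof.
  intros Hsize. pose proof (proj2 (size_subst s t) (eq_sym Hsize)) as Hvar.
  set (g := fun x => match s x with Var _ y => y | _ => x end).
  assert (Hg : forall x, In x (vars t) -> s x = var (g x)).
  { intros x Hx. destruct (Hvar x Hx) as [y Hy]. unfold g; rewrite Hy; auto. }
  set (m := nodup var_eq_dec (vars t)).
  destruct (classic (NoDup (map g m))) as [Hnd|Hnd].
  - left. destruct (@renaming_extend m g (NoDup_nodup var_eq_dec _)) as [p [Hp Hpg]].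
    { intros a b Ha Hb E. eapply NoDup_map_inj; eauto. }
    exists p. split; auto. apply subst_ext. intros x Hx.
    rewrite Hg; auto. f_equal. apply Hpg. apply nodup_In; auto.
  - right.
    assert (Hlen : length (nodup var_eq_dec (map g m)) < length m).
    { pose proof (nodup_length_le (map g m)) as L1. rewrite length_map in L1.
      assert (length (nodup var_eq_dec (map g m)) <> length (map g m)) as L2
        by (intro E; apply Hnd, NoDup_of_nodup_length; auto).
      rewrite length_map in L2. lia. }
    unfold nvars. fold m. eapply Nat.le_lt_trans; [|exact Hlen].
    apply NoDup_incl_length; [apply NoDup_nodup|]. intros y Hy.
    apply nodup_In in Hy. apply nodup_In. apply in_vars_subst in Hy.
    destruct Hy as [x [Hx Hy]]. rewrite Hg in Hy; auto. simpl in Hy.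
    destruct Hy as [<-|[]]. apply in_map. apply nodup_In; auto.
Qed.

(* The lexicographic order on (size, - nvars), packed into nat using
   nvars <= size. *)
Definition enc_weight (t : tm) : nat := size t * size t + size t - nvars t.

Lemma enc_renaming_or_weight_lt (l t : tm) :
  enc l t ->
  (exists p, renaming p /\ subst (fun x => var (p x)) l = t) \/ enc_weight l < enc_weight t.
Proof.
  intros Henc. unfold enc_weight.
  pose proof (nvars_le_size l); pose proof (nvars_le_size t).
  pose proof (size_pos l); pose proof (size_pos t).
  destruct (enc_size Henc) as [[s ->]|Hs]; [|right; nia].
  pose proof (proj1 (size_subst s l)).
  destruct (Nat.lt_ge_cases (size l) (size (subst s l))) as [Hs|Hs]; [right; nia|].
  destruct (@subst_size_eq_renaming_or_fewer_vars s l ltac:(lia)) as [Hren|Hnv];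
    [left; exact Hren | right; nia].
Qed.

End Terms.

Section Rddot.
Variables F V : Type.
Notation tm := (term F V).
Variables (B R Rdot : rules F V) (nf : rule F V -> tm).
Hypothesis HB : forall l r, B (l, r) -> incl (vars l) (vars r) /\ incl (vars r) (vars l).
Hypothesis HR : is_TRS R.
Hypothesis HSN : terminating_mod R B.
Hypothesis HCR : church_rosser_mod R B.
Hypothesis Hnf : forall l r, R (l, r) ->
  clos_refl_trans tm (relmod R B) r (nf (l, r)) /\ nf_of (relmod R B) (nf (l, r)).
Hypothesis HRdot_sub : forall rho, Rdot rho -> exists l r, R (l, r) /\ rho = (l, nf (l, r)).
Hypothesis HRdot_cover : forall rho, (exists l r, R (l, r) /\ rho = (l, nf (l, r))) ->
  exists rho', Rdot rho' /\ right_B_variants B rho rho'.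
Hypothesis HRdot_unique :
  forall rho rho', Rdot rho -> Rdot rho' -> right_B_variants B rho rho' -> rho = rho'.

Notation RM := (relmod R B).
Notation Rdd := (Rddot Rdot).

Lemma Rdot_rule l r : Rdot (l, r) -> exists r0, R (l, r0) /\ r = nf (l, r0).
Proof. intros HD. destruct (HRdot_sub HD) as [l0 [r0 [HR0 E]]]. injection E as -> ->. eauto. Qed.

Lemma Rddot_incl_Rdot rho : Rdd rho -> Rdot rho.
Proof. intros [HD _]; exact HD. Qed.

Lemma conv_nf_beq a b :
  conv_RB R B a b -> nf_of (rstep R) a -> nf_of (rstep R) b -> beq B a b.
Proof.
  intros H Ha Hb. destruct (HCR H) as [u [v [H1 [H2 H3]]]].
  apply clos_refl_trans_from_nf in H1; auto.
  apply clos_refl_trans_from_nf in H3; auto. subst; auto.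
Qed.

Lemma Rdot_rhs_nf l r : Rdot (l, r) -> nf_of RM r.
Proof. intros HD. destruct (Rdot_rule HD) as [r0 [HR0 ->]]. apply Hnf; auto. Qed.

Lemma Rdot_lhs_conv_rhs l r : Rdot (l, r) -> conv_RB R B l r.
Proof.
  intros HD. destruct (Rdot_rule HD) as [r0 [HR0 ->]].
  assert (Hs : rstep R l r0).
  { rewrite <- (subst_Var l), <- (subst_Var r0). constructor; auto. }
  eapply rst_trans; [apply rst_step; left; exact Hs|].
  apply relmod_star_conv, Hnf; auto.
Qed.

Lemma rstep_Rdot_relmod_plus s t : rstep Rdot s t -> clos_trans tm RM s t.
Proof.
  induction 1 as [l r s HD | f ts1 ts2 u v _ IH].
  - destruct (Rdot_rule HD) as [r0 [HR0 ->]].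
    apply clos_trans_step_rt with (subst s r0).
    + apply rstep_relmod. constructor; auto.
    + apply (clos_refl_trans_map (r:=RM) _ (subst s)); [intros; apply relmod_subst; auto|].
      apply Hnf; auto.
  - apply (clos_trans_map (r:=RM) _ (fun u => Fun f (ts1 ++ u :: ts2))); auto.
    intros; apply relmod_ctx; auto.
Qed.

Lemma relmod_Rddot_relmod_plus s t : relmod Rdd B s t -> clos_trans tm RM s t.
Proof.
  intros [s' [t' [H1 [H2 H3]]]]. eapply relmod_plus_beq; eauto.
  apply rstep_Rdot_relmod_plus. eapply rstep_incl; [apply Rddot_incl_Rdot | exact H2].
Qed.

Lemma Acc_relmod x : Acc (transp tm RM) x.
Proof. exact (Acc_of_no_chain _ HSN x). Qed.

Lemma Acc_relmod_Rddot x : Acc (transp tm (relmod Rdd B)) x.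
Proof.
  eapply Acc_incl; [| apply Acc_clos_trans, Acc_relmod].
  intros a b H. apply clos_trans_transp_permute, relmod_Rddot_relmod_plus, H.
Qed.

Lemma R_normal_form_exists s :
  exists u, clos_refl_trans tm (rstep R) s u /\ nf_of (rstep R) u.
Proof.
  apply normal_form_of_Acc. eapply Acc_incl; [| apply Acc_relmod].
  intros a b H. apply rstep_relmod, H.
Qed.

Lemma Rddot_normal_form_exists s :
  exists u, clos_refl_trans tm (rstep Rdd) s u /\ nf_of (rstep Rdd) u.
Proof.
  apply normal_form_of_Acc. eapply Acc_incl; [| apply Acc_relmod_Rddot].
  intros a b H. apply rstep_relmod, H.
Qed.

Lemma Rddot_star_conv a b : clos_refl_trans tm (rstep Rdd) a b -> conv_RB R B a b.
Proof.
  induction 1 as [a b H| |]; [| apply rst_refl | eapply rst_trans; eauto].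
  apply relmod_plus_conv, relmod_Rddot_relmod_plus, rstep_relmod, H.
Qed.

Lemma Rddot_conv_conv a b : conv_RB Rdd B a b -> conv_RB R B a b.
Proof.
  induction 1 as [a b [H|H]| | |].
  - apply Rddot_star_conv, rt_step, H.
  - apply rst_step; right; auto.
  - apply rst_refl.
  - apply rst_sym; auto.
  - eapply rst_trans; eauto.
Qed.

Lemma Rdot_lhs_not_variant l r l1 r1 p :
  Rdot (l, r) -> Rdot (l1, r1) -> (l1, r1) <> (l, r) -> renaming p ->
  subst (fun x => Var F (p x)) l1 <> l.
Proof.
  intros HD HD1 Hne Hp E. apply Hne, HRdot_unique; auto.
  exists p. split; auto. split; simpl; auto.
  apply conv_nf_beq.
  - eapply rst_trans; [apply rst_sym, conv_subst, Rdot_lhs_conv_rhs, HD1|].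
    rewrite E. apply Rdot_lhs_conv_rhs, HD.
  - apply (relmod_nf_rstep_nf (B:=B)), relmod_nf_renaming, (Rdot_rhs_nf HD1); auto.
  - apply (relmod_nf_rstep_nf (B:=B)), (Rdot_rhs_nf HD).
Qed.

Lemma R_lhs_enc_Rdot_lhs l r : R (l, r) -> exists l' r', Rdot (l', r') /\ enc l' l.
Proof.
  intros HR0. destruct (@HRdot_cover (l, nf (l, r))) as [[l' r'] [HD [p [[tau [H1 H2]] [E _]]]]].
  { exists l, r; auto. }
  simpl in E. exists l', r'. split; auto.
  replace l with (subst (fun x => Var F (tau x)) l'); [apply enc_root|].
  rewrite <- E, subst_subst; simpl.
  rewrite (subst_ext _ (@Var F V)); [apply subst_Var | intros; rewrite H1; auto].
Qed.

Lemma Rdot_lhs_enc_Rddot_lhs l r : Rdot (l, r) -> exists l' r', Rdd (l', r') /\ enc l' l.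
Proof.
  revert r. induction l as [l IH] using
    (well_founded_induction (well_founded_ltof _ (@enc_weight F V))).
  intros r HD.
  destruct (classic (Rdd (l, r))) as [HDD|HnDD]; [exists l, r; split; auto; apply enc_refl|].
  assert (Hred : exists u, rstep (remove_rule Rdot (l, r)) l u).
  { apply NNPP; intro Hc. apply HnDD. split; auto. }
  destruct Hred as [u Hu]. destruct (rstep_enc_lhs Hu) as [l1 [r1 [[HD1 Hne] Henc]]].
  destruct (enc_renaming_or_weight_lt Henc) as [[p [Hp E]]|Hlt].
  - exfalso. exact (Rdot_lhs_not_variant HD HD1 Hne Hp E).
  - destruct (IH l1 Hlt r1 HD1) as [l' [r' [H1 H2]]].
    exists l', r'; split; auto. eapply enc_trans; eauto.
Qed.

Lemma rstep_R_Rddot_reducible t u : rstep R t u -> exists w, rstep Rdd t w.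
Proof.
  intros H. destruct (rstep_enc_lhs H) as [l [r [HR0 He]]].
  destruct (R_lhs_enc_Rdot_lhs HR0) as [l' [r' [HD' He']]].
  destruct (Rdot_lhs_enc_Rddot_lhs HD') as [l'' [r'' [HDD He'']]].
  eapply (enc_lhs_rstep Rdd r'' HDD). eauto using enc_trans.
Qed.

Lemma Rddot_nf_R_nf t : nf_of (rstep Rdd) t -> nf_of (rstep R) t.
Proof. intros H [u Hu]. apply H. eapply rstep_R_Rddot_reducible; eauto. Qed.

Lemma conv_Rddot_joinable s t :
  conv_RB R B s t -> exists s' t', clos_refl_trans tm (rstep Rdd) s s' /\
    beq B s' t' /\ clos_refl_trans tm (rstep Rdd) t t'.
Proof.
  intros H.
  destruct (Rddot_normal_form_exists s) as [s' [H1 H2]].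
  destruct (Rddot_normal_form_exists t) as [t' [H3 H4]].
  exists s', t'. repeat split; auto.
  apply conv_nf_beq; try (apply Rddot_nf_R_nf; auto).
  eapply rst_trans; [apply rst_sym, Rddot_star_conv, H1|].
  eapply rst_trans; [exact H | apply Rddot_star_conv, H3].
Qed.

Lemma relmod_star_vars_incl a b :
  clos_refl_trans tm RM a b -> incl (vars b) (vars a).
Proof.
  induction 1 as [a b [a' [b' [H1 [H2 H3]]]]| |];
    [| apply incl_refl | eapply incl_tran; eauto].
  eapply incl_tran; [apply (beq_vars HB H3)|].
  eapply incl_tran; [|apply (beq_vars HB H1)].
  eapply rstep_vars_incl; [|exact H2]. intros l r Hl. apply (HR Hl).
Qed.

Lemma Rddot_is_TRS : is_TRS Rdd.
Proof.
  intros l r [HD _]. destruct (Rdot_rule HD) as [r0 [HR0 ->]].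
  destruct (HR HR0) as [Hl Hr]. split; auto.
  eapply incl_tran; [apply relmod_star_vars_incl, Hnf, HR0 | exact Hr].
Qed.

Lemma Rddot_normalization_equivalent : normalization_equivalent_mod Rdd R B.
Proof.
  intros s t; split; intros [u [[Hsu Hnu] Hut]].
  - destruct (R_normal_form_exists s) as [w [Hsw Hnw]].
    exists w; split; [split; auto|].
    eapply rst_trans; [|exact Hut]. apply conv_nf_beq; auto; [|apply Rddot_nf_R_nf; auto].
    eapply rst_trans; [apply rst_sym, rstar_conv, Hsw | apply Rddot_star_conv, Hsu].
  - destruct (Rddot_normal_form_exists s) as [w [Hsw Hnw]].
    exists w; split; [split; auto|].
    eapply rst_trans; [|exact Hut]. apply conv_nf_beq; auto; [|apply Rddot_nf_R_nf; auto].
    eapply rst_trans; [apply rst_sym, Rddot_star_conv, Hsw | apply rstar_conv, Hsu].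
Qed.

Lemma Rddot_conversion_equivalent : conversion_equivalent_mod Rdd R B.
Proof.
  intros s t; split; [apply Rddot_conv_conv|]. intros H.
  destruct (conv_Rddot_joinable H) as [s' [t' [H1 [Hb H3]]]].
  eapply rst_trans; [apply rstar_conv, H1|].
  eapply rst_trans; [apply beq_conv, Hb | apply rst_sym, rstar_conv, H3].
Qed.

Lemma Rddot_terminating : terminating_mod Rdd B.
Proof. intros [f Hf]. exact (no_chain_of_Acc (Acc_relmod_Rddot (f 0)) f 0 eq_refl Hf). Qed.

Lemma Rddot_church_rosser : church_rosser_mod Rdd B.
Proof. intros s t H. apply conv_Rddot_joinable, Rddot_conv_conv, H. Qed.

Lemma Rddot_left_reduced : left_reduced Rdd.
Proof.
  intros l r [HD Hn] [u Hu]. apply Hn. exists u. eapply rstep_incl; [|exact Hu].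
  intros rho [[HD' _] Hne]; split; auto.
Qed.

Lemma Rddot_right_B_reduced : right_B_reduced Rdd B.
Proof.
  intros l r [HD _] [w Hw]. apply relmod_Rddot_relmod_plus, clos_trans_t1n in Hw.
  destruct Hw as [w Hw|y w Hw _]; eapply (Rdot_rhs_nf HD); eauto.
Qed.

End Rddot.

Theorem theorem6p12 (F V : Type)
  (HV : forall xs : list V, exists x, ~ In x xs)
  (B : rules F V)
  (HB : forall l r, B (l, r) -> incl (vars l) (vars r) /\ incl (vars r) (vars l))
  (R : rules F V)
  (HR : is_TRS R)
  (Hcomp : complete_mod R B)
  (Rdot : rules F V)
  (Hdot : is_Rdot R B Rdot) :
  is_TRS (Rddot Rdot) /\
  normalization_equivalent_mod (Rddot Rdot) R B /\
  conversion_equivalent_mod (Rddot Rdot) R B /\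
  canonical_mod (Rddot Rdot) B.
Proof.
  destruct Hcomp as [HSN HCR], Hdot as [nf [Hnf [HRdot_sub [HRdot_cover HRdot_unique]]]].
  refine (conj _ (conj _ (conj _ (conj (conj _ _) (conj _ _))))).
  - exact (@Rddot_is_TRS F V B R Rdot nf HB HR Hnf HRdot_sub).
  - exact (@Rddot_normalization_equivalent F V B R Rdot nf HSN HCR Hnf HRdot_sub HRdot_cover HRdot_unique).
  - exact (@Rddot_conversion_equivalent F V B R Rdot nf HSN HCR Hnf HRdot_sub HRdot_cover HRdot_unique).
  - exact (@Rddot_terminating F V B R Rdot nf HSN Hnf HRdot_sub).
  - exact (@Rddot_church_rosser F V B R Rdot nf HSN HCR Hnf HRdot_sub HRdot_cover HRdot_unique).
  - exact (@Rddot_left_reduced F V Rdot).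
  - exact (@Rddot_right_B_reduced F V B R Rdot nf Hnf HRdot_sub).
Qed.
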